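(* Let $\mathcal{Y}$ be a set, fix $\alpha\in(0,1)$ and $b\in(0,\infty]$ (possibly $+\infty$). Let $L_t:2^{\mathcal{Y}}\times\mathcal{Y}\to[0,1]$, $t\in\mathbb{N}$, be loss functions with $L_t(\mathcal{Y},y)=0$ and $L_t(\emptyset,y)=1$ for all $y\in\mathcal{Y}$. Let $y_t\in\mathcal{Y}$ be arbitrary and let $\mathcal{C}_t\subseteq\mathcal{Y}$ be prediction sets determined by $q_t$ such that $\mathcal{C}_t=\emptyset$ whenever $q_t\le -b$ and $\mathcal{C}_t=\mathcal{Y}$ whenever $q_t\ge b$. Let $h:\mathbb{N}\to[0,\infty)$ be admissible (nonnegative, nondecreasing, sublinear: $h(t)/t\to0$), and let $r_t:\mathbb{R}\to[-\infty,\infty]$ satisfy, for some constant $c>0$ and all $t,x$, $$x \geq c\, h(t) \implies r_t(x) \geq b, \qquad x \leq -c\, h(t) \implies r_t(x) \leq -b.$$ With $q_1$ arbitrary, consider the iteration $$q_{t+1} = r_t\Big(\sum_{i=1}^t\big(L_i(\mathcal{C}_i,y_i)-\alpha\big)\Big).$$ Then for all $T\ge1$, $$\Bigg|\frac1T\sum_{t=1}^T\big(L_t(\mathcal{C}_t,y_t)-\alpha\big)\Bigg| \le \frac{c\,h(T)+1}{T}.$$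
   Context: Deterministic online conformal risk control setting: no probabilistic assumptions on the sequence $y_t$. *)

From HB Require Import structures.
From mathcomp Require Import all_boot all_order all_algebra.
From mathcomp Require Import all_classical all_reals all_analysis.
Set Implicit Arguments. Unset Strict Implicit. Unset Printing Implicit Defensive.
Import Order.TTheory GRing.Theory Num.Theory.
Import numFieldNormedType.Exports.
Local Open Scope ring_scope.
Local Open Scope classical_set_scope.

Definition admissible (R : realType) (h : nat -> R) : Prop :=
  (forall t, 0 <= h t) /\
  (forall s t, (s <= t)%N -> h s <= h t) /\
  ((fun t : nat => h t / t%:R) @ \oo --> (0 : R)).

(** A partial sum [S_t] of increments in [[-1, 1]] is pushed back towards [0]
    as soon as it leaves the band [[-c h(t), c h(t)]]: once [S_t >= c h(t)] the
    update makes [q_(t+1) >= b], so [C_(t+1)] is the whole space and the next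
    increment is [-alpha <= 0]; symmetrically below the band the next set is
    empty and the increment is [1 - alpha >= 0]. Since the band only widens
    ([h] is nondecreasing), [|S_t|] can overshoot it by at most one step, i.e.
    [|S_T| <= c h(T) + 1]; dividing by [T] gives the bound. *)
From HB Require Import structures.
From mathcomp Require Import all_boot all_order all_algebra.
From mathcomp Require Import all_classical all_reals all_analysis.
From mathcomp Require Import lra.
Import Order.TTheory GRing.Theory Num.Theory.
Import numFieldNormedType.Exports.
Local Open Scope ring_scope.
Local Open Scope classical_set_scope.

Lemma norm_subr_le1 (R : realDomainType) (x a : R) :
  0 <= x <= 1 -> 0 <= a <= 1 -> `|x - a| <= 1.
Proof. by move=> /andP[? ?] /andP[? ?]; rewrite ler_norml; apply/andP; split; lra. Qed.

Lemma norm_clipped_step {R : realDomainType} {s e g g' : R} :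
  0 <= g -> g <= g' -> `|e| <= 1 -> `|s| <= g + 1 ->
  (g <= s -> e <= 0) -> (s <= - g -> 0 <= e) -> `|s + e| <= g' + 1.
Proof.
move=> g0 gg'; rewrite !ler_norml => /andP[e1 e2] /andP[s1 s2] down up.
have [/down ?|gs] := lerP g s; first by apply/andP; split; lra.
have [/up ?|sg] := lerP s (- g); first by apply/andP; split; lra.
by apply/andP; split; lra.
Qed.

Section ClippedWalk.
Variables (R : realDomainType) (e g : nat -> R).

Let S t := \sum_(1 <= i < t.+1) e i.

Hypothesis e_le1 : forall i, `|e i| <= 1.
Hypothesis g_ge0 : forall t, 0 <= g t.
Hypothesis g_nondecr : forall t, g t <= g t.+1.
Hypothesis push_down : forall t, (1 <= t)%N -> g t <= S t -> e t.+1 <= 0.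
Hypothesis push_up : forall t, (1 <= t)%N -> S t <= - g t -> 0 <= e t.+1.

Lemma clipped_walk_bound T : (1 <= T)%N -> `|S T| <= g T + 1.
Proof.
elim: T => [//|[|T] IH] _.
  by rewrite /S big_nat1 (le_trans (e_le1 1)) // lerDr.
have -> : S T.+2 = S T.+1 + e T.+2 by rewrite /S big_nat_recr.
exact: norm_clipped_step (g_ge0 _) (g_nondecr _) (e_le1 _) (IH isT)
  (push_down _ (ltn0Sn T)) (push_up _ (ltn0Sn T)).
Qed.

End ClippedWalk.

Theorem proposition3 (R : realType) (Y : Type) (alpha : R) (b : \bar R)
  (L : nat -> set Y -> Y -> R) (y : nat -> Y)
  (Cset : nat -> \bar R -> set Y) (h : nat -> R)
  (r : nat -> R -> \bar R) (c : R) (q : nat -> \bar R) :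
  0 < alpha < 1 ->
  (0 < b)%E ->
  (forall t A z, 0 <= L t A z <= 1) ->
  (forall t z, L t setT z = 0) ->
  (forall t z, L t set0 z = 1) ->
  (forall t x, (x <= - b)%E -> Cset t x = set0) ->
  (forall t x, (b <= x)%E -> Cset t x = setT) ->
  admissible h ->
  0 < c ->
  (forall t x, c * h t <= x -> (b <= r t x)%E) ->
  (forall t x, x <= - (c * h t) -> (r t x <= - b)%E) ->
  (forall t, (1 <= t)%N ->
     q t.+1 = r t (\sum_(1 <= i < t.+1) (L i (Cset i (q i)) (y i) - alpha))) ->
  forall T : nat, (1 <= T)%N ->
    `| T%:R^-1 * \sum_(1 <= t < T.+1) (L t (Cset t (q t)) (y t) - alpha) |
      <= (c * h T + 1) / T%:R.
Proof.
move=> /andP[a0 a1] _ L01 LT L0 Cneg Cpos [h0 [hmono _]] c0 rpos rneg qrec T T1.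
have walk := @clipped_walk_bound R (fun t => L t (Cset t (q t)) (y t) - alpha)
  (fun t => c * h t).
rewrite normrM normfV normr_nat mulrC ler_pM2r ?invr_gt0 ?ltr0n //.
apply: walk => //.
- by move=> i; rewrite norm_subr_le1 // !ltW.
- by move=> t; rewrite mulr_ge0 ?h0 ?ltW.
- by move=> t; rewrite ler_pM2l ?hmono.
- by move=> t t1 Sge; rewrite qrec // Cpos ?rpos // LT sub0r oppr_le0 ltW.
- by move=> t t1 Sle; rewrite qrec // Cneg ?rneg // L0 subr_ge0 ltW.
Qed.
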